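(* Let $G$ be a graph, let $x$ be a vertex of degree at least $3$, and suppose that $G$ contains $t\geq 2$ twin stems of length $2$ rooted at $x$, i.e. paths $x u_i u_i'$ ($1\le i\le t$) with all $u_i,u_i'$ distinct, each $u_i$ of degree $2$ (adjacent only to $x$ and $u_i'$) and each $u_i'$ of degree $1$. Then $Dist(G)\geq \psi(t)$.
   Context: $Dist(H)$ is the least $t$ such that $H$ has a labeling $V(H)\to\{1,\dots,t\}$ preserved by no non-identity automorphism of $H$. The function $\psi:\mathbb{N}\setminus\{1\}\to\mathbb{N}\setminus\{1\}$ is defined by $\psi(m)=k$, where $k$ is the least number (with $k\ge 2$) such that $m\leq 2\binom{k}{2}+k$. For example $\psi(19)=5$. *)

From mathcomp Require Import all_boot all_fingroup.
Set Implicit Arguments. Unset Strict Implicit. Unset Printing Implicit Defensive.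

Definition simple_graph (T : finType) (adj : rel T) : Prop :=
  symmetric adj /\ irreflexive adj.

Definition deg (T : finType) (adj : rel T) (x : T) : nat := #|[set y | adj x y]|.

Definition is_aut (T : finType) (adj : rel T) (f : {perm T}) : bool :=
  [forall x, forall y, adj (f x) (f y) == adj x y].

Definition distinguishing (T : finType) (adj : rel T) (t : nat) : bool :=
  [exists c : {ffun T -> 'I_t}, forall f : {perm T},
    (is_aut adj f && [forall x, c (f x) == c x]) ==> (f == 1%g)].

Lemma distinguishing_exists (T : finType) (adj : rel T) :
  exists t, distinguishing adj t.
Proof.
exists #|T|; apply/existsP; exists [ffun x => enum_rank x].
apply/forallP => f; apply/implyP => /andP [_ /forallP Hf].
apply/eqP/permP => x; rewrite perm1.
by apply: enum_rank_inj; move/eqP: (Hf x); rewrite !ffunE.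
Qed.

Definition Dist (T : finType) (adj : rel T) : nat :=
  ex_minn (distinguishing_exists adj).

Lemma psi_exists (m : nat) : exists k, (2 <= k) && (m <= 2 * 'C(k, 2) + k).
Proof.
exists m.+2; apply/andP; split => //.
by apply: leq_trans (leq_addl _ _); apply: leqW; apply: leqW.
Qed.

Definition psi (m : nat) : nat := ex_minn (psi_exists m).

From mathcomp Require Import all_boot all_fingroup.
From mathcomp Require Import zify.
Set Implicit Arguments. Unset Strict Implicit. Unset Printing Implicit Defensive.

(* Exchanging two twin stems x u_i u_i' and x u_j u_j' is an automorphism.  If
   a labeling c gives both stems the same pair of labels (c u, c u'), this
   exchange also preserves c, so a distinguishing labeling with d labels
   injects the t stems into pairs of labels: t <= d * d = 2 * 'C(d, 2) + d,
   whence psi t <= d. *)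

Lemma bin2_sqr d : 2 * 'C(d, 2) + d = d * d.
Proof. by elim: d => [//|d IHd]; rewrite binS bin1; lia. Qed.

Lemma psi_leq m d : 2 <= m -> m <= d * d -> psi m <= d.
Proof.
move=> m_ge2 m_le; rewrite /psi; case: ex_minnP => k _; apply.
by rewrite bin2_sqr m_le andbT; nia.
Qed.

Lemma tperm_invariant (T : finType) (R : Type) (f : T -> R) a b :
  f a = f b -> forall y, f (tperm a b y) = f y.
Proof. by move=> fab y; case: tpermP => [->|->|]. Qed.

Lemma nbrs_eq (T : finType) (adj : rel T) v (A : {set T}) :
  A \subset [set y | adj v y] -> deg adj v <= #|A| -> [set y | adj v y] = A.
Proof. by move=> sA dv; apply/esym/eqP; rewrite eqEcard sA. Qed.

Lemma is_aut_perm_on (T : finType) (adj : rel T) (S : {set T}) (f : {perm T}) :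
  symmetric adj -> perm_on S f ->
  {in S, forall a, [set y | adj (f a) y] = f @: [set y | adj a y]} ->
  is_aut adj f.
Proof.
move=> adj_sym fS fN.
have adj_fS a b : a \in S -> adj (f a) (f b) = adj a b.
  by move=> /fN /setP /(_ (f b)); rewrite inE mem_imset ?inE //; apply: perm_inj.
apply/forallP => a; apply/forallP => b; apply/eqP.
have [/adj_fS //|aS] := boolP (a \in S).
have [bS|bS] := boolP (b \in S); first by rewrite adj_sym adj_fS // adj_sym.
by rewrite !(out_perm fS).
Qed.

Section TwinStemSwap.
Variables (T : finType) (adj : rel T) (x a1 b1 a2 b2 : T).
Hypothesis adj_sym : symmetric adj.
Hypotheses (N_a1 : [set y | adj a1 y] = [set x; b1])
  (N_a2 : [set y | adj a2 y] = [set x; b2])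
  (N_b1 : [set y | adj b1 y] = [set a1])
  (N_b2 : [set y | adj b2 y] = [set a2]).
Hypotheses (a1b1 : a1 != b1) (a1b2 : a1 != b2) (a2b1 : a2 != b1) (a2b2 : a2 != b2).
Hypotheses (xa1 : x != a1) (xa2 : x != a2) (xb1 : x != b1) (xb2 : x != b2).

Let swap := (tperm a1 a2 * tperm b1 b2)%g.

Let swap_a1 : swap a1 = a2.
Proof. by rewrite permM tpermL tpermD // eq_sym. Qed.

Let swap_a2 : swap a2 = a1.
Proof. by rewrite permM tpermR tpermD // eq_sym. Qed.

Let swap_b1 : swap b1 = b2.
Proof. by rewrite permM (tpermD a1b1 a2b1) tpermL. Qed.

Let swap_b2 : swap b2 = b1.
Proof. by rewrite permM (tpermD a1b2 a2b2) tpermR. Qed.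

Let swap_x : swap x = x.
Proof. by rewrite permM !tpermD // eq_sym. Qed.

Lemma twin_stem_swap_aut : is_aut adj swap.
Proof.
apply: (@is_aut_perm_on _ _ ([set a1; a2] :|: [set b1; b2])) => //.
  by apply: perm_onM; apply: subset_trans (tperm_on _ _) _;
    rewrite ?subsetUl ?subsetUr.
move=> a; rewrite !inE -orbA => /or4P[]/eqP->;
  by rewrite ?swap_a1 ?swap_a2 ?swap_b1 ?swap_b2 ?N_a1 ?N_a2 ?N_b1 ?N_b2
    ?imsetU1 !imset_set1 ?swap_x ?swap_a1 ?swap_a2 ?swap_b1 ?swap_b2.
Qed.

Lemma twin_stem_labels_differ d (c : {ffun T -> 'I_d}) :
  (forall f : {perm T}, is_aut adj f && [forall y, c (f y) == c y] ==> (f == 1%g)) ->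
  c a1 = c a2 -> c b1 = c b2 -> a1 = a2.
Proof.
move=> c_dist ca cb.
have c_swap : [forall y, c (swap y) == c y].
  by apply/forallP => y; rewrite permM !tperm_invariant.
have swap1 : swap = 1%g.
  by apply/eqP; apply: (implyP (c_dist swap)); rewrite twin_stem_swap_aut.
by rewrite -swap_a1 swap1 perm1.
Qed.

End TwinStemSwap.

Theorem lemma2p5 (T : finType) (adj : rel T) (x : T) (t : nat)
  (u u' : 'I_t -> T) :
  simple_graph adj ->
  3 <= deg adj x ->
  2 <= t ->
  injective u -> injective u' ->
  (forall i j, u i != u' j) ->
  (forall i, adj x (u i)) ->
  (forall i, adj (u i) (u' i)) ->
  (forall i, deg adj (u i) = 2) ->
  (forall i, deg adj (u' i) = 1) ->
  psi t <= Dist adj.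
Proof.
move=> [adj_sym adj_irr] deg_x t_ge2 u_inj _ u_neq_u' adj_x_u adj_u_u' deg_u deg_u'.
have x_u' i : x != u' i by apply: contraTneq deg_x => ->; rewrite deg_u'.
have x_u i : x != u i by apply: contraTneq (adj_x_u i) => ->; rewrite adj_irr.
have N_u i : [set y | adj (u i) y] = [set x; u' i].
  apply: nbrs_eq; last by rewrite deg_u cards2 x_u'.
  by apply/subsetP => y /set2P[] ->; rewrite inE // adj_sym.
have N_u' i : [set y | adj (u' i) y] = [set u i].
  by apply: nbrs_eq; rewrite ?deg_u' ?cards1 // sub1set inE adj_sym.
have /existsP [c /forallP c_dist] : distinguishing adj (Dist adj).
  by rewrite /Dist; case: ex_minnP.
have labels_inj : injective (fun i => (c (u i), c (u' i))).
  move=> i j [ci ci']; apply: u_inj.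
  apply: (twin_stem_labels_differ adj_sym (N_u i) (N_u j) (N_u' i) (N_u' j)
    (u_neq_u' i i) (u_neq_u' i j) (u_neq_u' j i) (u_neq_u' j j)
    (x_u i) (x_u j) (x_u' i) (x_u' j) c_dist ci ci').
by apply: psi_leq t_ge2 _; have := leq_card _ labels_inj; rewrite card_prod !card_ord.
Qed.
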